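(* Let $Q$ be a quiver and let $\Pi\in\mathcal{V}^2Q$ be a Poisson structure on $\mathbb{C}Q$ such that $\Pi=\Pi^1+\Pi^2$, where $\Pi^1$ and $\Pi^2$ are homogeneous of different degrees. Then $\Pi^1$ and $\Pi^2$ are compatible Poisson structures on $\mathbb{C}Q$, i.e. $[\Pi^i,\Pi^j]_{\mathcal V}=0$ for $i,j=1,2$.
   Context: A quiver $Q$ has vertex set $I=\{1,\dots,k\}$, arrows $Q$, head/tail maps $h,t$. The path algebra $\mathbb{C}Q$ has basis the paths (including trivial paths $e_i$), multiplied by concatenation written right to left. The double quiver $\bar Q$ has arrows $Q\cup\{a^*\}$ with $h(a^* )=t(a)$, $t(a^* )=h(a)$; $\mathbb{C}\bar Q^r$ is spanned by paths with exactly $r$ starred arrows. $\mathcal{V}Q$ is the quotient of $\mathbb{C}\bar Q$ by the span of $PR-(-1)^{pr}RP$ ($P\in\mathbb{C}\bar Q^p$, $R\in\mathbb{C}\bar Q^r$), graded by $r$. For $w\in\bar Q$, $D_w(x_1\cdots x_n)=\sum_{i:x_i=w}(-1)^{\lambda_i\mu_i}x_{i+1}\cdots x_nx_1\cdots x_{i-1}$, $\lambda_i$ (resp. $\mu_i$) the number of starred arrows among $x_{i+1},\dots,x_n$ (resp. $x_1,\dots,x_i$). For $\gamma\in\mathcal{V}^rQ,\delta\in\mathcal{V}^sQ$: $[\gamma,\delta]_{\mathcal V}=\sum_{a\in Q}\big(D_{a^*}(\gamma)D_a(\delta)-(-1)^{(r-1)(s-1)}D_{a^*}(\delta)D_a(\gamma)\big)$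 modulo the relations. A Poisson structure on $\mathbb{C}Q$ is $\Pi\in\mathcal{V}^2Q$ with $[\Pi,\Pi]_{\mathcal V}=0$. Every element of $\mathcal{V}^2Q$ can be written as $\sum_{a,b\in Q}\sum_{P,R}[Pa^*,Rb^*]$ with $P,R\in\mathbb{C}Q$ paths, where $[u,v]=uv-vu$; such an element is homogeneous of degree $p$ if each nonzero closed path $Pa^*Rb^*$ occurring has length $p+2$. *)

From HB Require Import structures.
From mathcomp Require Import all_boot all_order all_algebra.
Set Implicit Arguments. Unset Strict Implicit. Unset Printing Implicit Defensive.
Import GRing.Theory Num.Theory.
Local Open Scope ring_scope.

Record quiver := Quiver {
  nverts : nat;
  arrow : finType;
  hA : arrow -> 'I_nverts;
  tA : arrow -> 'I_nverts }.

Section DoubleQuiver.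
Variable Q : quiver.

(* Arrows of the double quiver: inl a = a, inr a = a^* *)
Definition letter := (arrow Q + arrow Q)%type.
Definition hL (x : letter) := match x with inl a => hA a | inr a => tA a end.
Definition tL (x : letter) := match x with inl a => tA a | inr a => hA a end.
Definition starred (x : letter) : bool := if x is inr _ then true else false.

(* Raw path: a vertex and a word x_1 ... x_n (written right to left:
   x_n is traversed first).  The trivial path e_i is (i, [::]);
   a nonempty word is a path iff t(x_i) = h(x_{i+1}), and its vertex
   component is normalised to h(x_1). *)
Definition rawpath := ('I_(nverts Q) * seq letter)%type.
Definition valid (w : rawpath) : bool :=
  match w.2 with
  | [::] => true
  | x :: s => (w.1 == hL x) && path (fun y z => tL y == hL z) x s
  end.
Definition hdP (w : rawpath) := if w.2 is x :: _ then hL x else w.1.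
Definition tlP (w : rawpath) := if w.2 is x :: s then tL (last x s) else w.1.
Definition closedP (w : rawpath) : bool := tlP w == hdP w.
Definition nstar (w : rawpath) : nat := count starred w.2.
Definition mkpath (v : 'I_(nverts Q)) (s : seq letter) : rawpath :=
  (if s is x :: _ then hL x else v, s).
Definition lpath (x : letter) : rawpath := (hL x, [:: x]).
(* partial concatenation P R (R first, then P): None means the product is 0 *)
Definition pcat (P R : rawpath) : option rawpath :=
  if [&& valid P, valid R & tlP P == hdP R] then Some (hdP P, P.2 ++ R.2)
  else None.

Variable C : numClosedFieldType.

(* Elements of C\bar Q: coefficient functions on paths (zero off valid paths). *)
Definition elt := rawpath -> C.
Definition pt (P : rawpath) : elt := fun w => (w == P)%:R.

Definition mulE (f g : elt) : elt := fun w =>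
  if valid w then
    \sum_(j < (size w.2).+1)
       f (mkpath (hdP w) (take j w.2)) * g (mkpath (tlP w) (drop j w.2))
  else 0.

Definition commE (f g : elt) : elt := fun w => mulE f g w - mulE g f w.

Definition inCQbar (r : nat) (f : elt) : Prop :=
  forall w, f w != 0 -> valid w && (nstar w == r).

Definition relgen (P R : rawpath) : elt := fun w =>
  mulE (pt P) (pt R) w - (-1) ^+ (nstar P * nstar R) * mulE (pt R) (pt P) w.

(* x is zero in V Q, i.e. x lies in the span of the relations *)
Definition inV0 (x : elt) : Prop :=
  exists s : seq (C * rawpath * rawpath),
    forall w, x w = \sum_(t <- s) t.1.1 * relgen t.1.2 t.2 w.

Definition eqV (x y : elt) : Prop := inV0 (fun w => x w - y w).

(* D_z(x_1...x_n) = sum_{i : x_i = z} (-1)^{lambda_i mu_i} x_{i+1}..x_n x_1..x_{i-1},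
   computed on the closed paths of the representative (non-closed paths are 0
   in V Q).  D_z(g)(u) collects the closed paths x having u as such a rotation;
   the position index j = i - 1 ranges over 0..size u. *)
Definition Dw (z : letter) (g : elt) : elt := fun u =>
  if valid u then
    \sum_(j < (size u.2).+1)
      let m := size u.2 in
      let x := mkpath (hdP u) (drop (m - j) u.2 ++ z :: take (m - j) u.2) in
      let lam := count starred (take (m - j) u.2) in
      let mu := count starred (drop (m - j) u.2) + starred z in
      if [&& valid x, closedP x & (u.2 != [::]) || (u.1 == tL z)]
      then (-1) ^+ (lam * mu) * g x else 0
  else 0.

(* [g, d]_V for g in V^r, d in V^s; note (-1)^{(r-1)(s-1)} = (-1)^{(r+1)(s+1)} *)
Definition brV (r s : nat) (g d : elt) : elt := fun u =>
  \sum_(a : arrow Q)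
     (mulE (Dw (inr a) g) (Dw (inl a) d) u
      - (-1) ^+ (r.+1 * s.+1) * mulE (Dw (inr a) d) (Dw (inl a) g) u).

Definition starP (a : arrow Q) : rawpath := lpath (inr a).

Definition term_path (P : rawpath) (a : arrow Q) (R : rawpath) (b : arrow Q)
  : option rawpath :=
  obind (fun x => obind (fun y => pcat y (starP b)) (pcat x R)) (pcat P (starP a)).

Definition homogeneous (p : nat) (g : elt) : Prop :=
  exists s : seq (C * rawpath * arrow Q * rawpath * arrow Q),
    (forall c P a R b, (c, P, a, R, b) \in s ->
       [/\ valid P, nstar P = 0%N, valid R, nstar R = 0%N &
           c != 0 -> forall w, term_path P a R b = Some w -> closedP w ->
             size w.2 = p.+2]) /\
    eqV g (fun w => \sum_(t <- s)
       t.1.1.1.1 * commE (mulE (pt t.1.1.1.2) (pt (starP t.1.1.2)))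
                         (mulE (pt t.1.2) (pt (starP t.2))) w).

End DoubleQuiver.

(* Every double derivation D_z annihilates the relations of V Q: on a relation
   P R - (-1)^(pr) R P the signed sum over the rotations of a closed path pairs
   each rotation of P R with a rotation of R P, and the Koszul signs of rotations
   form a cocycle, which produces exactly the factor (-1)^(pr).  Hence D_z is
   defined on V Q, and for Pi homogeneous of degree p it only takes nonzero values
   on paths of length p + 1; so [Pi_i, Pi_j]_V only lives on paths of length
   p_i + p_j + 2.  The relations are homogeneous in length, so V Q is graded by
   length.  As [Pi, Pi] = [Pi1, Pi1] + [Pi2, Pi2] + 2 [Pi1, Pi2] has its three
   summands in the distinct degrees 2 p1 + 2, 2 p2 + 2 and p1 + p2 + 2, each of them
   vanishes in V Q. *)

From HB Require Import structures.
From mathcomp Require Import all_boot all_order all_algebra zify ring.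
Set Implicit Arguments. Unset Strict Implicit. Unset Printing Implicit Defensive.
Import GRing.Theory Num.Theory.

Section RotationSign.
Variables (T : Type) (a : pred T).

Lemma rot_rot_mod (s : seq T) k l : k < size s -> l <= size s ->
  rot l (rot k s) = rot ((l + k) %% size s) s.
Proof.
move=> lt_k le_l; rewrite rot_add_mod ?(ltnW lt_k) //; case: ltngtP => [lt|gt|->].
- by rewrite modn_small.
- by rewrite -[in RHS](subnK (ltnW gt)) modnDr modn_small //; lia.
- by rewrite modnn rot_size rot0.
Qed.

(* Parity of the Koszul sign (-1)^(lambda mu) of moving the block drop k s
   in front of take k s. *)
Definition rot_sign (k : nat) (s : seq T) : bool :=
  odd (count a (take k s) * count a (drop k s)).

Lemma rot_sign_add (s : seq T) k l : k < size s -> l <= size s ->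
  rot_sign k s = rot_sign l (rot k s) (+) rot_sign ((l + k) %% size s) s.
Proof.
rewrite /rot_sign => lt_k le_l; case: (ltnP (l + k) (size s)) => lt_lk.
  rewrite modn_small //.
  have [X [M [E [-> <- <-]]]] :
      exists X M E, [/\ s = X ++ M ++ E, size X = k & size M = l].
    exists (take k s), (take l (drop k s)), (drop l (drop k s)).
    rewrite !cat_take_drop size_takel ?size_takel //; last by lia.
    by rewrite size_drop; lia.
  rewrite /rot take_size_cat // drop_size_cat // -catA take_size_cat //.
  rewrite drop_size_cat // addnC catA take_size_cat ?size_cat //.
  rewrite drop_size_cat ?size_cat // !count_cat !oddM !oddD.
  by case: (odd (count a X)); case: (odd (count a M)); case: (odd (count a E)).
have [X1 [X2 [D [def_s e1 e2 e3]]]] : exists X1 X2 D,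
    [/\ s = X1 ++ X2 ++ D, size X1 = (l + k) %% size s,
        size X1 + size X2 = k & size D + size X1 = l].
  have emod : (l + k) %% size s = l + k - size s.
    by rewrite -[in LHS](subnK lt_lk) modnDr modn_small //; lia.
  rewrite emod; set m := l + k - size s.
  exists (take m s), (take (k - m) (drop m s)), (drop (k - m) (drop m s)).
  rewrite !cat_take_drop size_takel; last by lia.
  rewrite size_takel ?size_drop; last by lia.
  by split => //; lia.
rewrite -e1 -e2 -e3 -!size_cat def_s catA rot_size_cat.
rewrite take_size_cat // drop_size_cat // catA take_size_cat //.
rewrite drop_size_cat // -catA take_size_cat // drop_size_cat //.
rewrite !count_cat !oddM !oddD.
by case: (odd (count a X1)); case: (odd (count a X2)); case: (odd (count a D)).
Qed.

End RotationSign.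

Section Paths.
Variable Q : quiver.
Implicit Types (P R w : rawpath Q) (v : 'I_(nverts Q)) (W : seq (letter Q)).

Definition adjacent : rel (letter Q) := fun y z => tL y == hL z.

Lemma mkpath_hdP P : valid P -> mkpath (hdP P) P.2 = P.
Proof. by case: P => v [|x s]; rewrite /valid /= => // /andP[/eqP -> _]. Qed.

Lemma mkpath_tlP P : valid P -> mkpath (tlP P) P.2 = P.
Proof. by case: P => v [|x s]; rewrite /valid /= => // /andP[/eqP -> _]. Qed.

Lemma mkpath_nonempty v P : valid P -> P.2 != [::] -> mkpath v P.2 = P.
Proof. by case: P => u [|x s]; rewrite /valid /= => // /andP[/eqP -> _]. Qed.

Lemma valid_closed_mkpath v W :
  valid (mkpath v W) && closedP (mkpath v W) = cycle adjacent W.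
Proof.
case: W => [|x s]; first by rewrite /closedP /= eqxx.
by rewrite /valid /closedP /= eqxx rcons_path.
Qed.

Lemma valid_concat P R : valid P -> valid R -> tlP P = hdP R ->
  [/\ valid (hdP P, P.2 ++ R.2), hdP (hdP P, P.2 ++ R.2) = hdP P
    & tlP (hdP P, P.2 ++ R.2) = tlP R].
Proof.
case: P => v [|x s]; case: R => u [|y t]; rewrite /valid /hdP /tlP /=.
- by move=> _ _ ->.
- by move=> _ /andP[_ ->] ->; rewrite eqxx.
- by rewrite cats0 => /andP[_ ->] _ ->; rewrite eqxx.
move=> /andP[_ pxs] /andP[_ pyt] e; rewrite cat_path pxs /= pyt e !eqxx.
by rewrite last_cat.
Qed.

Lemma pcat_Some P R w : pcat P R = Some w ->
  [/\ valid P, valid R, tlP P = hdP R & w = (hdP P, P.2 ++ R.2)] /\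
  [/\ valid w, hdP w = hdP P & tlP w = tlP R].
Proof.
rewrite /pcat; case: ifP => // /and3P[vP vR /eqP e] [<-].
by have [] := valid_concat vP vR e.
Qed.

Lemma pcat_mkpath_split w W1 W2 : valid w -> w.2 = W1 ++ W2 ->
  pcat (mkpath (hdP w) W1) (mkpath (tlP w) W2) = Some w.
Proof.
case: w => v W /= vw eW; subst W.
case: W1 vw => [|x s]; case: W2 => [|y t]; rewrite /pcat /valid /hdP /tlP /mkpath /=.
- by rewrite eqxx.
- by move=> /andP[/eqP -> p]; rewrite eqxx p.
- by rewrite cats0 => /andP[/eqP -> p]; rewrite !eqxx p.
move=> /andP[/eqP ->]; rewrite cat_path /= => /and3P[p1 e p2].
by rewrite !eqxx p1 p2 e.
Qed.

Lemma pcat_assoc P R w :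
  obind (fun PR => pcat PR w) (pcat P R) = obind (pcat P) (pcat R w).
Proof.
case E1: (pcat P R) => [PR|]; case E2: (pcat R w) => [Rw|] //=.
- have [[vP vR e1 ->] _] := pcat_Some E1; have [[_ vw e2 ->] _] := pcat_Some E2.
  have [j1 j2 j3] := valid_concat vP vR e1; have [k1 k2 k3] := valid_concat vR vw e2.
  by rewrite /pcat j1 k1 vw vP j2 j3 k2 e2 e1 !eqxx /= catA.
- have [[vP vR e1 ->] _] := pcat_Some E1; have [j1 j2 j3] := valid_concat vP vR e1.
  by move: E2; rewrite /pcat j1 vR j3 /=; case: (valid w); case: (tlP R == hdP w).
- have [[vR vw e2 ->] _] := pcat_Some E2; have [k1 k2 k3] := valid_concat vR vw e2.
  by move: E1; rewrite /pcat k1 vR k2 /=; case: (valid P); case: (tlP P == hdP R).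
Qed.

Lemma pcat_closed_swap P R w : pcat P R = Some w -> closedP w ->
  pcat R P = Some (hdP R, R.2 ++ P.2) /\ closedP (hdP R, R.2 ++ P.2).
Proof.
move=> /pcat_Some[[vP vR e _] [_ hw tw]]; rewrite /closedP hw tw => /eqP e'.
have [_ -> ->] := valid_concat vR vP e'.
by rewrite /pcat vR vP e' eqxx e.
Qed.

Lemma pcat_cycle_swap P R v W : cycle adjacent W -> W != [::] ->
  pcat P R = Some (mkpath v W) ->
  W = P.2 ++ R.2 /\ pcat R P = Some (mkpath v (R.2 ++ P.2)).
Proof.
move=> cW nW E; have [[_ _ _ eW] _] := pcat_Some E; move: eW => /(congr1 snd) /= eW.
have cl : closedP (mkpath v W) by have := valid_closed_mkpath v W; rewrite cW => /andP[].
have [E' _] := pcat_closed_swap E cl; have [_ [vRP _ _]] := pcat_Some E'.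
rewrite E'; split => //; congr Some; symmetry; apply: (mkpath_nonempty v vRP).
by rewrite /= -size_eq0 size_cat addnC -size_cat -eW size_eq0.
Qed.

Lemma pcat_rot_eq P R v W : cycle adjacent W -> W != [::] ->
  (pcat P R == Some (mkpath v W)) =
  (pcat R P == Some (mkpath v (rot (size P.2) W))).
Proof.
move=> cW nW; apply/eqP/eqP => E.
  by have [eW ->] := pcat_cycle_swap cW nW E; rewrite eW rot_size_cat.
have cW' : cycle adjacent (rot (size P.2) W) by rewrite rot_cycle.
have nW' : rot (size P.2) W != [::] by rewrite -size_eq0 size_rot size_eq0.
have [eW ->] := pcat_cycle_swap cW' nW' E.
by rewrite -(rotK (size P.2) W) eW rotr_size_cat.
Qed.

End Paths.

Local Open Scope ring_scope.

Section PathAlgebra.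
Variables (Q : quiver) (C : numClosedFieldType).
Implicit Types (P R w : rawpath Q) (f g : elt Q C).

Definition opt_pt (o : option (rawpath Q)) : elt Q C :=
  if o is Some y then pt C y else fun=> 0.

Definition ocat (o1 o2 : option (rawpath Q)) : option (rawpath Q) :=
  obind (fun y1 => obind (pcat y1) o2) o1.

Lemma opt_ptE o w : opt_pt o w = (o == Some w)%:R.
Proof. by case: o => [y|] //=; rewrite /pt eq_sym. Qed.

Lemma eq_mulE f f' g g' w : f =1 f' -> g =1 g' -> mulE f g w = mulE f' g' w.
Proof.
by move=> ef eg; rewrite /mulE; case: ifP => // _; apply: eq_bigr => j _; rewrite ef eg.
Qed.

Lemma mulEDl f1 f2 g w :
  mulE (fun v => f1 v + f2 v) g w = mulE f1 g w + mulE f2 g w.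
Proof.
rewrite /mulE; case: ifP => _; last by rewrite addr0.
by rewrite -big_split; apply: eq_bigr => j _; rewrite mulrDl.
Qed.

Lemma mulEDr f g1 g2 w :
  mulE f (fun v => g1 v + g2 v) w = mulE f g1 w + mulE f g2 w.
Proof.
rewrite /mulE; case: ifP => _; last by rewrite addr0.
by rewrite -big_split; apply: eq_bigr => j _; rewrite mulrDr.
Qed.

Lemma mkpath_split_eq P R w (j : nat) : valid w -> (j <= size w.2)%N ->
  (mkpath (hdP w) (take j w.2) == P) && (mkpath (tlP w) (drop j w.2) == R) =
  (j == size P.2) && (pcat P R == Some w).
Proof.
move=> vw le_j; apply/andP/andP => [[/eqP eP /eqP eR] | [/eqP -> /eqP E]].
  by rewrite -eP -eR pcat_mkpath_split ?cat_take_drop //= size_takel.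
have [[vP vR _ def_w] [_ -> ->]] := pcat_Some E.
by rewrite def_w /= take_size_cat // drop_size_cat // mkpath_hdP // mkpath_tlP.
Qed.

Lemma mulE_pt P R w : mulE (pt C P) (pt C R) w = (pcat P R == Some w)%:R.
Proof.
rewrite /mulE /pt; case: ifP => vw; last first.
  by case: eqP => // /pcat_Some[_ [vw' _ _]]; rewrite vw' in vw.
under eq_bigr => j _ do
  rewrite -natrM mulnb (mkpath_split_eq _ _ vw (ltn_ord j)) -mulnb natrM.
case: eqP => E; last by rewrite big1 // => j _; rewrite mulr0.
have [[_ _ _ def_w] _] := pcat_Some E.
have lt_P : (size P.2 < (size w.2).+1)%N by rewrite def_w size_cat ltnS leq_addr.
rewrite (bigD1 (Ordinal lt_P)) //= eqxx big1 ?addr0 ?mulr1 // => j ne_j.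
by case: eqP; rewrite ?mul0r // => e; case/eqP: ne_j; apply: val_inj.
Qed.

Lemma mulE_opt_pt o1 o2 w :
  mulE (opt_pt o1) (opt_pt o2) w = opt_pt (ocat o1 o2) w.
Proof.
case: o1 => [y1|]; case: o2 => [y2|] /=; rewrite ?opt_ptE ?mulE_pt //.
all: by rewrite /mulE; case: ifP => // _; rewrite big1 // => j _; rewrite ?mulr0 ?mul0r.
Qed.

End PathAlgebra.

Section Derivations.
Variables (Q : quiver) (C : numClosedFieldType).
Implicit Types (P R u w : rawpath Q) (f g x : elt Q C) (z : letter Q).

Definition signed_rot_sum g v (S : seq (letter Q)) : C :=
  \sum_(k < size S) (-1) ^+ rot_sign (@starred Q) k S * g (mkpath v (rot k S)).

Lemma DwE z g u : Dw z g u =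
  if [&& valid u, cycle (@adjacent Q) (rcons u.2 z) & (u.2 != [::]) || (u.1 == tL z)]
  then signed_rot_sum g (hdP u) (rcons u.2 z) else 0.
Proof.
rewrite /Dw /signed_rot_sum size_rcons; case: ifP => //= _.
rewrite (reindex_inj rev_ord_inj) /=; set S := rcons u.2 z.
transitivity (\sum_(k < (size u.2).+1)
   if cycle (@adjacent Q) S && ((u.2 != [::]) || (u.1 == tL z)) then
     (-1) ^+ rot_sign (@starred Q) k S * g (mkpath (hdP u) (rot k S)) else 0);
  last by case: ifP => // _; rewrite big1.
apply: eq_bigr => k _; have le_k : (k <= size u.2)%N by rewrite -ltnS.
rewrite subSS subKn // /rot_sign signr_odd.
have -> : drop k u.2 ++ z :: take k u.2 = rot k S.
  by rewrite /rot /S drop_rcons // -!cats1 takel_cat // -catA.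
have -> : (count (@starred Q) (drop k u.2) + starred z)%R = count (@starred Q) (drop k S).
  by rewrite /S drop_rcons // -cats1 count_cat /= addn0.
by rewrite /S -cats1 takel_cat // andbA valid_closed_mkpath rot_cycle.
Qed.

Lemma signed_rot_sum_pcat P R v S : cycle (@adjacent Q) S -> S != [::] ->
  signed_rot_sum (opt_pt C (pcat P R)) v S =
  (-1) ^+ (nstar P * nstar R) * signed_rot_sum (opt_pt C (pcat R P)) v S.
Proof.
move=> cS nS; have n_gt0 : (0 < size S)%N by rewrite lt0n size_eq0.
have cyc_rot m : cycle (@adjacent Q) (rot m S) by rewrite rot_cycle.
have nil_rot m : rot m S != [::] by rewrite -size_eq0 size_rot size_eq0.
set l := size P.2.
pose shift (k : 'I_(size S)) := Ordinal (ltn_pmod (l + k) n_gt0).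
have shift_inj : injective shift.
  move=> k1 k2 /(congr1 val) /= /eqP; rewrite eqn_modDl !modn_small //.
  by move/eqP; apply: val_inj.
rewrite /signed_rot_sum [in RHS](reindex_inj shift_inj) big_distrr /=.
apply: eq_bigr => k _; rewrite !opt_ptE.
have le_l : pcat R P = Some (mkpath v (rot ((l + k) %% size S) S)) -> (l <= size S)%N.
  move=> /(pcat_cycle_swap (cyc_rot _) (nil_rot _))[eS _].
  by rewrite -(size_rot ((l + k) %% size S)) eS size_cat leq_addl.
case: (boolP (pcat P R == _)) => [/eqP E | ne].
  have [eSk _] := pcat_cycle_swap (cyc_rot k) (nil_rot k) E.
  have le_l' : (l <= size S)%N by rewrite -(size_rot k) eSk size_cat leq_addr.
  rewrite -(rot_rot_mod (ltn_ord k) le_l') -(pcat_rot_eq _ _ _ (cyc_rot k) (nil_rot k)).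
  rewrite E eqxx (rot_sign_add _ (ltn_ord k) le_l') signr_addb.
  rewrite eSk /rot_sign take_size_cat // drop_size_cat // signr_odd.
  by rewrite !mulr1.
rewrite mulr0; case: eqP => [E | _]; last by rewrite !mulr0.
move: ne; rewrite (pcat_rot_eq _ _ _ (cyc_rot k) (nil_rot k)).
by rewrite (rot_rot_mod (ltn_ord k) (le_l E)) E eqxx.
Qed.

Lemma Dw_relgen z P R u : Dw z (relgen C P R) u = 0.
Proof.
rewrite DwE; case: ifP => // /and3P[_ cS _].
have nS : rcons u.2 z != [::] by rewrite -size_eq0 size_rcons.
have -> : signed_rot_sum (relgen C P R) (hdP u) (rcons u.2 z) =
    signed_rot_sum (opt_pt C (pcat P R)) (hdP u) (rcons u.2 z) -
    (-1) ^+ (nstar P * nstar R) * signed_rot_sum (opt_pt C (pcat R P)) (hdP u) (rcons u.2 z).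
  rewrite /signed_rot_sum mulr_sumr -sumrB; apply: eq_bigr => k _.
  by rewrite /relgen !mulE_pt -!opt_ptE; ring.
by rewrite signed_rot_sum_pcat // subrr.
Qed.

Lemma eq_Dw z f g u : f =1 g -> Dw z f u = Dw z g u.
Proof. by move=> e; rewrite /Dw; case: ifP => // _; apply: eq_bigr => j _ /=; rewrite e. Qed.

Lemma DwD z f g u : Dw z (fun w => f w + g w) u = Dw z f u + Dw z g u.
Proof.
rewrite /Dw; case: ifP => _; last by rewrite addr0.
rewrite -big_split; apply: eq_bigr => j _ /=.
by case: ifP => _; [rewrite mulrDr | rewrite addr0].
Qed.

Lemma DwZ z c g u : Dw z (fun w => c * g w) u = c * Dw z g u.
Proof.
rewrite /Dw; case: ifP => _; last by rewrite mulr0.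
rewrite big_distrr; apply: eq_bigr => j _ /=.
by case: ifP => _; [rewrite mulrCA | rewrite mulr0].
Qed.

Lemma Dw_sum (T : Type) (s : seq T) (F : T -> elt Q C) z u :
  Dw z (fun w => \sum_(t <- s) F t w) u = \sum_(t <- s) Dw z (F t) u.
Proof.
rewrite /Dw; case: ifP => _; last by rewrite big1.
rewrite exchange_big /=; apply: eq_bigr => j _ /=.
by case: ifP => _; [rewrite big_distrr | rewrite big1].
Qed.

Lemma Dw_inV0 z x u : inV0 x -> Dw z x u = 0.
Proof.
move=> [s hs]; rewrite (eq_Dw _ _ hs) Dw_sum big1 // => t _.
by rewrite DwZ Dw_relgen mulr0.
Qed.

Lemma Dw_eqV z f g u : eqV f g -> Dw z f u = Dw z g u.
Proof.
move=> /(Dw_inV0 z u) e; rewrite -[RHS]addr0 -e -DwD.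
by apply: eq_Dw => w; rewrite addrC subrK.
Qed.

End Derivations.

Lemma sumr_neq0 (V : zmodType) (I : eqType) (s : seq I) (F : I -> V) :
  \sum_(t <- s) F t != 0 -> exists2 t, t \in s & F t != 0.
Proof.
move=> nz; apply/hasP; apply: contraNT nz => /hasPn F0.
by rewrite big1_seq // => t /andP[_ /F0 /negPn /eqP].
Qed.

Section Homogeneity.
Variables (Q : quiver) (C : numClosedFieldType).
Implicit Types (P R u w x : rawpath Q) (g : elt Q C) (z : letter Q) (a b : arrow Q).

Definition bracket_sum (s : seq (C * rawpath Q * arrow Q * rawpath Q * arrow Q)) :
    elt Q C := fun w =>
  \sum_(t <- s) t.1.1.1.1 * commE (mulE (pt C t.1.1.1.2) (pt C (starP t.1.1.2)))
                                  (mulE (pt C t.1.2) (pt C (starP t.2))) w.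

Lemma ocat_closed_swap o1 o2 x : ocat o2 o1 = Some x -> closedP x ->
  exists y, [/\ ocat o1 o2 = Some y, closedP y & size y.2 = size x.2].
Proof.
case: o1 o2 => [y1|] [y2|] //= E cx; have [E' cy] := pcat_closed_swap E cx.
exists (hdP y1, y1.2 ++ y2.2); split => //.
by have [[_ _ _ ->] _] := pcat_Some E; rewrite /= !size_cat addnC.
Qed.

Lemma term_path_ocat P a R b :
  term_path P a R b = ocat (pcat P (starP a)) (pcat R (starP b)).
Proof. by rewrite /term_path /ocat; case: (pcat P _) => //= y; exact: pcat_assoc. Qed.

Lemma commE_closed_support P a R b x : closedP x ->
  commE (mulE (pt C P) (pt C (starP a))) (mulE (pt C R) (pt C (starP b))) x != 0 ->
  exists y, [/\ term_path P a R b = Some y, closedP y & size y.2 = size x.2].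
Proof.
move=> cx; set A := pcat P (starP a); set B := pcat R (starP b).
have eA : mulE (pt C P) (pt C (starP a)) =1 opt_pt C A by move=> w; rewrite mulE_pt opt_ptE.
have eB : mulE (pt C R) (pt C (starP b)) =1 opt_pt C B by move=> w; rewrite mulE_pt opt_ptE.
rewrite /commE (eq_mulE _ eA eB) (eq_mulE _ eB eA) !mulE_opt_pt !opt_ptE term_path_ocat.
case: (eqVneq (ocat A B) (Some x)) => [E _ | _]; first by exists x.
case: (eqVneq (ocat B A) (Some x)) => [E _ | _]; last by rewrite subrr eqxx.
exact: ocat_closed_swap E cx.
Qed.

Definition homogeneous_terms p (s : seq (C * rawpath Q * arrow Q * rawpath Q * arrow Q)) :=
  forall c P a R b, (c, P, a, R, b) \in s ->
    [/\ valid P, nstar P = 0%N, valid R, nstar R = 0%N &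
        c != 0 -> forall w, term_path P a R b = Some w -> closedP w -> size w.2 = p.+2].

Lemma bracket_sum_closed_size p s : homogeneous_terms p s ->
  forall x, closedP x -> bracket_sum s x != 0 -> size x.2 = p.+2.
Proof.
move=> hs x cx /sumr_neq0[[[[[c P] a] R] b] /hs[_ _ _ _ Hsize]].
rewrite mulf_eq0 negb_or => /andP[nc /(commE_closed_support cx)[y [Ey cy <-]]].
exact: Hsize Ey cy.
Qed.

Lemma Dw_support z g u : Dw z g u != 0 ->
  exists x, [/\ closedP x, g x != 0 & size x.2 = (size u.2).+1].
Proof.
rewrite DwE; case: ifP => [/and3P[_ cS _] | _]; last by rewrite eqxx.
move=> /sumr_neq0[k _]; rewrite mulf_eq0 negb_or => /andP[_ nz].
exists (mkpath (hdP u) (rot k (rcons u.2 z))); split => //=.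
  by have := valid_closed_mkpath (hdP u) (rot k (rcons u.2 z)); rewrite rot_cycle cS => /andP[].
by rewrite size_rot size_rcons.
Qed.

Definition Dw_homogeneous (n : nat) g := forall z u, Dw z g u != 0 -> size u.2 = n.

Lemma homogeneous_Dw p g : homogeneous p g -> Dw_homogeneous p.+1 g.
Proof.
move=> [s [hs /Dw_eqV eg]] z u; rewrite eg => /Dw_support[x [cx nx sx]].
by have := bracket_sum_closed_size hs cx nx; rewrite sx => -[].
Qed.

End Homogeneity.

Section Bracket.
Variables (Q : quiver) (C : numClosedFieldType).
Implicit Types (u w : rawpath Q) (f g d : elt Q C).

Lemma mulE_homogeneous f g n1 n2 u :
  (forall v, f v != 0 -> size v.2 = n1) -> (forall v, g v != 0 -> size v.2 = n2) ->
  mulE f g u != 0 -> size u.2 = (n1 + n2)%N.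
Proof.
move=> hf hg; rewrite /mulE; case: ifP => _; last by rewrite eqxx.
move=> /sumr_neq0[j _]; rewrite mulf_eq0 negb_or => /andP[/hf e1 /hg e2].
by rewrite -(cat_take_drop j u.2) size_cat -e1 -e2.
Qed.

(* For r = s = 2 the sign (-1)^((r-1)(s-1)) is -1, so the bracket is symmetric. *)
Lemma brV22E g d u : brV 2 2 g d u = \sum_(a : arrow Q)
  (mulE (Dw (inr a) g) (Dw (inl a) d) u + mulE (Dw (inr a) d) (Dw (inl a) g) u).
Proof. by apply: eq_bigr => a _; rewrite -signr_odd /= expr1 mulN1r opprK. Qed.

Lemma brV22C g d u : brV 2 2 g d u = brV 2 2 d g u.
Proof. by rewrite !brV22E; apply: eq_bigr => a _; rewrite addrC. Qed.

Lemma brV22D f1 f2 u :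
  brV 2 2 (fun w => f1 w + f2 w) (fun w => f1 w + f2 w) u =
  brV 2 2 f1 f1 u + brV 2 2 f2 f2 u + (brV 2 2 f1 f2 u + brV 2 2 f2 f1 u).
Proof.
rewrite !brV22E -!big_split; apply: eq_bigr => a _ /=.
rewrite !(eq_mulE _ (fun w => DwD _ f1 f2 w) (fun w => DwD _ f1 f2 w)).
by rewrite !mulEDl !mulEDr; ring.
Qed.

Lemma brV22_eq0 n1 n2 g d u : Dw_homogeneous n1 g -> Dw_homogeneous n2 d ->
  size u.2 != (n1 + n2)%N -> brV 2 2 g d u = 0.
Proof.
move=> hg hd ne; apply/eqP; apply: contraNT ne; rewrite brV22E => /sumr_neq0[a _].
have [-> | nz _] := eqVneq (mulE (Dw (inr a) g) (Dw (inl a) d) u) 0.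
  by rewrite add0r addnC => /(mulE_homogeneous (hd _) (hg _)) ->.
by rewrite (mulE_homogeneous (hg _) (hd _) nz).
Qed.

End Bracket.

Section RelationsAreGraded.
Variables (Q : quiver) (C : numClosedFieldType).
Implicit Types (P R w : rawpath Q) (x y : elt Q C).

Lemma eq_inV0 x y : x =1 y -> inV0 x -> inV0 y.
Proof. by move=> e [s hs]; exists s => w; rewrite -e hs. Qed.

Lemma inV0Z c x : inV0 x -> inV0 (fun w => c * x w).
Proof.
move=> [s hs]; exists [seq (c * t.1.1, t.1.2, t.2) | t <- s] => w.
by rewrite hs big_map big_distrr; apply: eq_bigr => t _ /=; rewrite mulrA.
Qed.

Lemma relgen_eq0 P R w : size w.2 != (size P.2 + size R.2)%N -> relgen C P R w = 0.
Proof.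
move=> hs; rewrite /relgen !mulE_pt.
case: eqP => [/pcat_Some[[_ _ _ e] _]|_]; first by move: hs; rewrite e /= size_cat eqxx.
case: eqP => [/pcat_Some[[_ _ _ e] _]|_]; first by move: hs; rewrite e /= size_cat addnC eqxx.
by rewrite mulr0 subrr.
Qed.

(* The relations are homogeneous in path length, so V Q is graded by length. *)
Lemma inV0_component n x y : inV0 x ->
  (forall w, size w.2 = n -> x w = y w) -> (forall w, size w.2 != n -> y w = 0) ->
  inV0 y.
Proof.
move=> [s hs] exy y0; exists [seq t <- s | (size t.1.2.2 + size t.2.2 == n)%N] => w.
rewrite big_filter big_mkcond /=.
case: (eqVneq (size w.2) n) => [e | ne]; last first.
  by rewrite y0 // big1 // => t _; case: eqP => // e; rewrite relgen_eq0 ?mulr0 // e.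
rewrite -exy // hs; apply: eq_bigr => t _; case: eqP => // /eqP ne.
by rewrite relgen_eq0 ?mulr0 // e eq_sym.
Qed.

End RelationsAreGraded.

Theorem mainTheorem4 (Q : quiver) (C : numClosedFieldType)
    (Pi1 Pi2 : elt Q C) (p1 p2 : nat) :
  inCQbar 2 Pi1 -> inCQbar 2 Pi2 ->
  homogeneous p1 Pi1 -> homogeneous p2 Pi2 -> p1 <> p2 ->
  let Pi := fun w => Pi1 w + Pi2 w in
  inV0 (brV 2 2 Pi Pi) ->
  [/\ inV0 (brV 2 2 Pi1 Pi1), inV0 (brV 2 2 Pi2 Pi2),
      inV0 (brV 2 2 Pi1 Pi2) & inV0 (brV 2 2 Pi2 Pi1)].
Proof.
move=> _ _ /homogeneous_Dw D1 /homogeneous_Dw D2 ne_p Pi hPi.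
have expand w : brV 2 2 Pi Pi w =
    brV 2 2 Pi1 Pi1 w + brV 2 2 Pi2 Pi2 w + 2%:R * brV 2 2 Pi1 Pi2 w.
  by rewrite brV22D [brV 2 2 Pi2 Pi1 w]brV22C mulr_natl mulr2n.
have hPi12 : inV0 (brV 2 2 Pi1 Pi2).
  apply: (inV0_component (n := (p1.+1 + p2.+1)%N) (inV0Z 2%:R^-1 hPi)) => w ew.
    rewrite expand (brV22_eq0 D1 D1) ?(brV22_eq0 D2 D2) ?ew; try (apply/eqP; lia).
    by rewrite !add0r mulrA mulVf ?mul1r // pnatr_eq0.
  exact: (brV22_eq0 D1 D2 ew).
split=> //; last by apply: eq_inV0 hPi12 => w; rewrite brV22C.
- apply: (inV0_component (n := (p1.+1 + p1.+1)%N) hPi) => w ew;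
    last exact: (brV22_eq0 D1 D1 ew).
  rewrite expand (brV22_eq0 D2 D2) ?(brV22_eq0 D1 D2) ?ew; try (apply/eqP; lia).
  by rewrite mulr0 !addr0.
- apply: (inV0_component (n := (p2.+1 + p2.+1)%N) hPi) => w ew;
    last exact: (brV22_eq0 D2 D2 ew).
  rewrite expand (brV22_eq0 D1 D1) ?(brV22_eq0 D1 D2) ?ew; try (apply/eqP; lia).
  by rewrite mulr0 add0r addr0.
Qed.
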